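(* Let $(N^\circ,M^\circ,L^\circ)\in OLag(V)^3$ be a triple of oriented Lagrangians which are pairwise in general position (i.e. $N+M=M+L=N+L=V$). Then $$T_{N^\circ,L^\circ}=T_{N^\circ,M^\circ}\circ T_{M^\circ,L^\circ}$$ as maps $\mathcal H_{L^\circ}\to\mathcal H_{N^\circ}$.
   Context: Let $p$ be an odd prime, $q$ a power of $p$, and $(V,\omega)$ a symplectic vector space of dimension $2n$ over $\mathbb F_q$. The Heisenberg group $H(V)$ is the set $V\times\mathbb F_q$ with multiplication $(v,z)\cdot(v',z')=(v+v',z+z'+\tfrac12\omega(v,v'))$; its center is $Z=\{(0,z):z\in\mathbb F_q\}$. Fix a non-trivial character $\psi:\mathbb F_q\to\mathbb C^\times$. An isotropic subspace $I\subset V$ is regarded as the subgroup $\{(i,0):i\in I\}$ of $H(V)$. An oriented Lagrangian is a pair $L^\circ=(L,o_L)$ with $L\subset V$ a Lagrangian subspace and $o_L\in\bigwedge^nL$ nonzero; $OLag(V)$ denotes the set of oriented Lagrangians. For $L^\circ\in OLag(V)$, $\mathcal H_{L^\circ}$ is the space of functions $f:H(V)\to\mathbb C$ with $f((0,z)\cdot(l,0)\cdot h)=\psi(z)f(h)$ for all $z\in\mathbb F_q$, $l\in L$, $h\in H(V)$, on which $H(V)$ acts by right translation $(\pi_{L^\circ}(h)f)(h')=f(h'h)$. For a $2k$-dimensional symplectic space $(W,\omega)$ and Lagrangians $A,B\subset W$, define $\omega_\wedge:\bigwedge^kA\times\bigwedge^kB\to\mathbb F_q$ by $\omega_\wedge(a_1\wedge\dots\wedge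 a_k,\,b_1\wedge\dots\wedge b_k)=(-1)^{k(k-1)/2}\det\big(\omega(a_i,b_j)\big)_{i,j}$. Let $\sigma$ be the Legendre character of $\mathbb F_q^\times$ (the unique character of order $2$) and $G_1=\sum_{z\in\mathbb F_q}\psi(\tfrac12z^2)$. Lagrangians $M,L$ are in general position if $M+L=V$. For $(M^\circ,L^\circ)$ in general position define $F_{M^\circ,L^\circ}:\mathcal H_{L^\circ}\to\mathcal H_{M^\circ}$ by $F_{M^\circ,L^\circ}[f](h)=\sum_{m\in M}f((m,0)\cdot h)$, the constant $A_{M^\circ,L^\circ}=(G_1/q)^n\,\sigma\big((-1)^{n(n-1)/2}\omega_\wedge(o_L,o_M)\big)$, and $T_{M^\circ,L^\circ}=A_{M^\circ,L^\circ}\cdot F_{M^\circ,L^\circ}$. *)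

From HB Require Import structures.
From mathcomp Require Import all_boot all_order all_algebra all_field.
Set Implicit Arguments. Unset Strict Implicit. Unset Printing Implicit Defensive.
Import GRing.Theory Num.Theory.
Local Open Scope ring_scope.

(* The symplectic space V of dimension 2n over the finite field F is modelled
   as F^(n+n) (row vectors), with omega(u,v) = u J v^T for a matrix J. *)
Section Heisenberg.
Variables (F : finFieldType) (n : nat) (J : 'M[F]_(n + n)).

Definition vec := 'rV[F]_(n + n).

Definition omega (u v : vec) : F := (u *m J *m v^T) 0 0.

(* omega is alternating and nondegenerate (bilinearity is automatic). *)
Definition symplectic : Prop :=
  (forall v : vec, omega v v = 0) /\
  (forall u : vec, (forall v : vec, omega u v = 0) -> u = 0).

Definition heis := (vec * F)%type.
Definition hmul (h h' : heis) : heis :=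
  (h.1 + h'.1, h.2 + h'.2 + 2^-1 * omega h.1 h'.1).

(* An oriented Lagrangian (L, o_L) is represented by an n x 2n matrix B whose
   rows b_1..b_n form a basis of L, with o_L = b_1 /\ ... /\ b_n. *)
Definition olag (B : 'M[F]_(n, n + n)) : Prop :=
  row_free B /\
  (forall u v : vec, (u <= B)%MS -> (v <= B)%MS -> omega u v = 0).

Definition gen_pos (BM BL : 'M[F]_(n, n + n)) : Prop :=
  (1%:M <= BM + BL)%MS.

(* omega_wedge (a_1/\../\a_n, b_1/\../\b_n) = (-1)^(n(n-1)/2) det(omega(a_i,b_j)) *)
Definition omega_wedge (A B : 'M[F]_(n, n + n)) : F :=
  (-1) ^+ (n * (n - 1) %/ 2)%N *
  \det (\matrix_(i < n, j < n) omega (row i A) (row j B)).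

Definition legendre (x : F) : algC :=
  if x == 0 then 0 else if [exists y : F, y ^+ 2 == x] then 1 else -1.

Definition nontriv_char (psi : F -> algC) : Prop :=
  (forall a, psi a != 0) /\
  (forall a b, psi (a + b) = psi a * psi b) /\
  (exists a, psi a != 1).

Definition G1 (psi : F -> algC) : algC := \sum_(z : F) psi (2^-1 * z ^+ 2).

Definition inH (psi : F -> algC) (BL : 'M[F]_(n, n + n)) (f : heis -> algC)
  : Prop :=
  forall (z : F) (l : vec) (h : heis), (l <= BL)%MS ->
    f (hmul (hmul (0, z) (l, 0)) h) = psi z * f h.

Definition Fmap (BM : 'M[F]_(n, n + n)) (f : heis -> algC) : heis -> algC :=
  fun h => \sum_(m : vec | (m <= BM)%MS) f (hmul (m, 0) h).

Definition Acoef (psi : F -> algC) (BM BL : 'M[F]_(n, n + n)) : algC :=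
  (G1 psi / (#|F|%:R)) ^+ n *
  legendre ((-1) ^+ (n * (n - 1) %/ 2)%N * omega_wedge BL BM).

Definition Tmap (psi : F -> algC) (BM BL : 'M[F]_(n, n + n))
  (f : heis -> algC) : heis -> algC :=
  fun h => Acoef psi BM BL * Fmap BM f h.

End Heisenberg.

From HB Require Import structures.
From mathcomp Require Import all_boot all_order all_algebra all_field.
From mathcomp Require Import fingroup perm cyclic ring.
Set Implicit Arguments. Unset Strict Implicit. Unset Printing Implicit Defensive.
Import GRing.Theory Num.Theory.
Local Open Scope ring_scope.

(* Write the middle Lagrangian as M = A N + B L (A, B invertible, since M is
   transversal to N and L) and let P = L J N^T be the Gram matrix of omega on
   L x N.  Unfolding T_{N,M} (T_{M,L} f) and using the L-equivariance of f to
   absorb the L-component of m in M, the composite becomes F_N f times the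
   scalar kernel  sum_x psi(-omega(x B L, x A N)/2) = sum_x psi(q_S(x)/2)
   for the quadratic form of S = -B P A^T, symmetric because M is isotropic.
   That sum is a multivariable Gauss sum, evaluated to G(1)^n (det S / q) by
   diagonalising S.  Expressing all three constants A_{.,.} through the Gram
   matrices B P, P A^T and P, the cocycle identity reduces to the scalar
   fact G(1)^2 = (-1/q) q together with (x/q)^2 = 1. *)

Section Legendre.

Variable F : finFieldType.
Hypothesis two_nz : (2%:R : F) != 0.

(* In odd characteristic -1 is a unit of order 2, so 2 divides q - 1. *)
Lemma two_dvd_card_units : (2 %| #|F|.-1)%N.
Proof.
pose u := FinRing.Unit (unitrN1 F).
have u_neq1 : u != 1%g.
  apply/eqP=> /(congr1 val) /= /eqP; rewrite eq_sym -subr_eq0 opprK.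
  by apply/negP; rewrite -[1 + 1]/(2%:R : F).
have u_sq : (u ^+ 2 == 1)%g.
  by apply/eqP/val_inj; rewrite FinRing.val_unitX /= expr2 mulrNN mulr1.
have ord_u : #[u]%g = 2%N.
  have div2 : (#[u]%g %| 2)%N by rewrite order_dvdn.
  have neq1 : #[u]%g != 1%N by rewrite order_eq1.
  by move: (order_gt0 u) (dvdn_leq (isT : (0 < 2)%N) div2) neq1; case: #[u]%g => [|[|[|]]].
by rewrite -card_finField_unit -ord_u order_dvdG // inE.
Qed.

(* The Legendre symbol of g^k is (-1)^k for a generator g of F^x: an element
   is a square exactly when it is an even power of g. *)
Lemma legendre_generator : exists g : F, g != 0 /\
  (forall x : F, x != 0 -> exists k, x = g ^+ k) /\
  forall k, legendre (g ^+ k) = (-1) ^+ k.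
Proof.
have /cyclicP [gu gen_gu] := field_unit_group_cyclic [set: {unit F}]%G.
have ord_gu : #[gu]%g = #|F|.-1 by rewrite orderE -gen_gu card_finField_unit.
have g_nz : val gu != 0 by rewrite -unitfE (valP gu).
have powers : forall x : F, x != 0 -> exists k, x = val gu ^+ k.
  move=> x x_nz; have : finField_unit x_nz \in <[gu]>%g by rewrite -gen_gu inE.
  by case/cycleP=> k xk; exists k; rewrite -FinRing.val_unitX -xk.
exists (val gu); split => //; split => // k.
rewrite /legendre expf_eq0 (negPf g_nz) andbF.
have [k_odd | k_even] := boolP (odd k).
  case: existsP => [[y /eqP y_sq]|]; last by rewrite -signr_odd k_odd expr1.
  have y_nz : y != 0.
    by apply: contra_eq_neq y_sq => ->; rewrite expr0n eq_sym expf_neq0.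
  have [j y_pow] := powers y y_nz.
  move: y_sq; rewrite y_pow -exprM -!FinRing.val_unitX => /val_inj /eqP.
  rewrite eq_expg_mod_order ord_gu => /eqP jk.
  have /modn_dvdm mod2 := two_dvd_card_units.
  have : ((j * 2) %% 2 = k %% 2)%N by rewrite -mod2 jk mod2.
  by rewrite !modn2 oddM andbF k_odd.
rewrite -signr_odd (negPf k_even) expr0.
case: existsP => // [[]]; exists (val gu ^+ k./2).
by rewrite -exprM mulnC -{2}(odd_double_half k) (negPf k_even) add0n -mul2n.
Qed.

Lemma legendre0 : legendre (0 : F) = 0.
Proof. by rewrite /legendre eqxx. Qed.

Lemma legendre1 : legendre (1 : F) = 1.
Proof.
rewrite /legendre oner_eq0; case: existsP => // [[]].
by exists 1; rewrite expr1n.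
Qed.

Lemma legendreM (x y : F) : legendre (x * y) = legendre x * legendre y.
Proof.
have [-> | x_nz] := eqVneq x 0; first by rewrite mul0r legendre0 mul0r.
have [-> | y_nz] := eqVneq y 0; first by rewrite mulr0 legendre0 mulr0.
have [g [_ [powers leg_pow]]] := legendre_generator.
have [a ->] := powers x x_nz; have [b ->] := powers y y_nz.
by rewrite -exprD !leg_pow exprD.
Qed.

Lemma legendreX (x : F) k : legendre (x ^+ k) = legendre x ^+ k.
Proof.
by elim: k => [|k IHk]; rewrite ?expr0 ?legendre1 // !exprS legendreM IHk.
Qed.

Lemma legendre_sign (x : F) : x != 0 -> legendre x * legendre x = 1.
Proof.
move=> x_nz; have [g [_ [powers leg_pow]]] := legendre_generator.
have [a ->] := powers x x_nz.
by rewrite leg_pow -exprD -signr_odd addnn odd_double expr0.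
Qed.

Lemma legendreV (x : F) : legendre x^-1 = legendre x.
Proof.
have [-> | x_nz] := eqVneq x 0; first by rewrite invr0.
have inv : legendre x * legendre x^-1 = 1 by rewrite -legendreM divff ?legendre1.
by rewrite -[LHS]mul1r -(legendre_sign x_nz) -mulrA inv mulr1.
Qed.

Lemma card_sqrt (t : F) :
  (#|[pred z : F | z ^+ 2 == t]|)%:R = 1 + legendre t :> algC.
Proof.
have [-> | t_nz] := eqVneq t 0.
  rewrite legendre0 addr0 (@eq_card _ _ (pred1 0)) ?card1 // => z.
  by rewrite !inE expf_eq0.
rewrite /legendre (negPf t_nz); case: existsP => [[y /eqP y_sq] | no_root].
  have y_nz : y != 0.
    by apply: contra_neq t_nz => y0; rewrite -y_sq y0 expr0n.
  have y_neq_opp : y != - y.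
    apply: contra_neq y_nz => y_opp; apply/eqP.
    have : y * 2%:R == 0 by rewrite mulr_natr mulr2n {1}y_opp addNr.
    by rewrite mulf_eq0 (negPf two_nz) orbF.
  rewrite (@eq_card _ _ [set y; - y]) ?cards2 ?y_neq_opp // => z.
  by rewrite !inE -y_sq -subr_eq0 subr_sqr mulf_eq0 !subr_eq0 addr_eq0.
rewrite eq_card0 ?subrr // => z; rewrite !inE.
by apply/negP=> z_sq; apply: no_root; exists z.
Qed.

Lemma sum_squares (g : F -> algC) :
  \sum_(z : F) g (z ^+ 2) = \sum_(t : F) (1 + legendre t) * g t.
Proof.
transitivity (\sum_(z : F) \sum_(t : F) (if z ^+ 2 == t then g t else 0)).
  apply: eq_bigr => z _; rewrite -big_mkcond /=.
  by rewrite (big_pred1 (z ^+ 2)) // => t; rewrite /= eq_sym.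
rewrite exchange_big; apply: eq_bigr => t _.
by rewrite -big_mkcond /= sumr_const -card_sqrt mulr_natl.
Qed.

End Legendre.

Section GaussSums.

Variables (F : finFieldType) (psi : F -> algC).
Hypotheses (two_nz : (2%:R : F) != 0) (psi_char : nontriv_char psi).

Lemma char0 : psi 0 = 1.
Proof.
have [psi_nz [psiD _]] := psi_char.
by apply: (mulfI (psi_nz 0)); rewrite -psiD addr0 mulr1.
Qed.

Lemma sum_char_scale (c : F) : c != 0 -> \sum_(t : F) psi (c * t) = 0.
Proof.
move=> c_nz; have [_ [psiD [a psi_a]]] := psi_char.
transitivity (\sum_(t : F) psi t); first by rewrite [RHS](reindex_inj (mulfI c_nz)).
have shift : psi a * \sum_(t : F) psi t = \sum_(t : F) psi t.
  rewrite mulr_sumr [RHS](reindex_inj (addrI a)) /=.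
  by apply: eq_bigr => t _; rewrite psiD.
apply/eqP; move/eqP: shift.
by rewrite -subr_eq0 -{2}[\sum_t _]mul1r -mulrBl mulf_eq0 subr_eq0 (negPf psi_a).
Qed.

Lemma gauss_sum_scale (d : F) : d != 0 ->
  \sum_(z : F) psi (2^-1 * (d * z ^+ 2)) = legendre d * G1 psi.
Proof.
pose H (e : F) := \sum_(t : F) legendre t * psi (2^-1 * (e * t)).
have G_H : forall e, e != 0 -> \sum_(z : F) psi (2^-1 * (e * z ^+ 2)) = H e.
  move=> e e_nz; rewrite (sum_squares two_nz (fun t => psi (2^-1 * (e * t)))).
  under eq_bigr => t _ do rewrite mulrDl mul1r.
  rewrite big_split /=.
  under [X in X + _]eq_bigr => t _ do rewrite mulrA.
  by rewrite sum_char_scale ?add0r // mulf_neq0 ?invr_eq0.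
have G1_H : G1 psi = H 1.
  by rewrite -G_H ?oner_eq0 //; apply: eq_bigr => z _; rewrite mul1r.
move=> d_nz; rewrite G_H // G1_H /H.
rewrite (reindex_inj (mulfI (invr_neq0 d_nz))) /= mulr_sumr.
apply: eq_bigr => s _.
by rewrite legendreM // legendreV // mulVKf // mul1r mulrA.
Qed.

Lemma gauss_sum_sqr : G1 psi ^+ 2 = legendre (-1 : F) * (#|F|)%:R.
Proof.
have [_ [psiD _]] := psi_char.
have GG : G1 psi * (legendre (-1 : F) * G1 psi) = (#|F|)%:R.
  rewrite -gauss_sum_scale ?oppr_eq0 ?oner_eq0 // /G1 mulr_suml.
  transitivity (\sum_(w : F) \sum_(u : F) psi (2^-1 * u ^+ 2) * psi (u * w)).
    under eq_bigr => z _ do rewrite mulr_sumr.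
    rewrite exchange_big /=; apply: eq_bigr => w _.
    rewrite (reindex_inj (addrI w)) /=; apply: eq_bigr => u _.
    rewrite -!psiD; congr psi.
    rewrite mulN1r mulrN -mulrBr subr_sqr [w + u]addrC addrK.
    rewrite -addrA mulrDr mulrDr -expr2; congr (_ + _).
    by rewrite -mulr2n mulrnAr -[(u * w) *+ 2]mulr_natl mulKf.
  rewrite exchange_big /= (bigD1 0) //= [X in _ + X]big1 ?addr0.
    rewrite (eq_bigr (fun _ => 1)) ?sumr_const //.
    by move=> w _; rewrite expr0n /= mulr0 mul0r char0 mulr1.
  by move=> u u_nz; rewrite -mulr_sumr sum_char_scale // mulr0.
have sign_m1 : legendre (-1 : F) * legendre (-1 : F) = 1.
  by rewrite legendre_sign // oppr_eq0 oner_eq0.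
by rewrite -GG (mulrC (G1 psi)) !mulrA sign_m1 mul1r expr2.
Qed.

(* The scalar identity behind the cocycle relation: with c = G(1)/q, the
   product of the three normalising constants collapses. *)
Lemma gauss_cocycle_scalar n (a b p : F) : a != 0 -> b != 0 -> p != 0 ->
  (G1 psi / (#|F|)%:R) ^+ n * legendre p =
  (G1 psi / (#|F|)%:R) ^+ n * legendre (b * p) *
  ((G1 psi / (#|F|)%:R) ^+ n * legendre (p * a)) *
  (G1 psi ^+ n * legendre ((-1) ^+ n * b * p * a)).
Proof.
move=> a_nz b_nz p_nz; set c := G1 psi / _.
have q_nz : (#|F|)%:R != 0 :> algC.
  by rewrite pnatr_eq0 -lt0n (ltn_trans _ (finNzRing_gt1 F)).
have c_unit : c * G1 psi * legendre (-1 : F) = 1.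
  have -> : c * G1 psi = G1 psi ^+ 2 / (#|F|)%:R by rewrite /c mulrAC expr2.
  rewrite gauss_sum_sqr mulfK //.
  by rewrite legendre_sign // oppr_eq0 oner_eq0.
rewrite !(legendreM two_nz) (legendreX two_nz).
transitivity (c ^+ n * legendre p * (c * G1 psi * legendre (-1 : F)) ^+ n *
  (legendre b * legendre b) * (legendre p * legendre p) *
  (legendre a * legendre a)).
  by rewrite c_unit expr1n !legendre_sign // !mulr1.
by rewrite !exprMn; ring.
Qed.

End GaussSums.

Lemma mul_delta_mxE (R : fieldType) m n p (a : 'I_m) (b : 'I_n)
    (A : 'M[R]_(n, p)) c d :
  (delta_mx a b *m A) c d = (c == a)%:R * A b d.
Proof.
rewrite mxE (bigD1 b) //= big1 ?addr0; first by rewrite mxE eqxx andbT.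
by move=> i ib; rewrite mxE (negPf ib) andbF mul0r.
Qed.

Lemma mulmx_deltaE (R : fieldType) m n p (a : 'I_n) (b : 'I_p)
    (A : 'M[R]_(m, n)) c d :
  (A *m delta_mx a b) c d = A c a * (d == b)%:R.
Proof.
rewrite mxE (bigD1 a) //= big1 ?addr0; first by rewrite mxE eqxx.
by move=> i ia; rewrite mxE (negPf ia) mulr0.
Qed.

Section QuadraticForms.

Variable R : fieldType.

Definition qform k (S : 'M[R]_k) (x : 'rV[R]_k) : R := (x *m S *m x^T) 0 0.

Lemma qform_mulmx k (P S : 'M[R]_k) (y : 'rV[R]_k) :
  qform S (y *m P) = qform (P *m S *m P^T) y.
Proof. by rewrite /qform trmx_mul !mulmxA. Qed.

Lemma qform_block k l (a : 'M[R]_k) (S : 'M[R]_l) y1 y2 :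
  qform (block_mx a 0 0 S) (row_mx y1 y2) = qform a y1 + qform S y2.
Proof.
rewrite /qform mul_row_block !mulmx0 addr0 add0r tr_row_mx mul_row_col.
by rewrite mxE.
Qed.

Lemma qform_scalar (t : R) (a : 'rV[R]_1) :
  qform (t%:M : 'M[R]_1) a = t * (a 0 0) ^+ 2.
Proof.
rewrite /qform mul_mx_scalar -scalemxAl mxE mxE big_ord1 !mxE.
by rewrite expr2 mulrA.
Qed.

Hypothesis two_nz : (2%:R : R) != 0.

(* A nonzero symmetric matrix is congruent to one with a nonzero corner:
   either some diagonal entry is nonzero (permute it to the corner), or some
   S i j != 0 and the change of basis e_i |-> e_i + e_j creates 2 S i j on
   the diagonal. *)
Lemma sym_corner_nz k (S : 'M[R]_k.+1) : S^T = S -> S != 0 ->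
  exists P : 'M[R]_k.+1, P \in unitmx /\ (P *m S *m P^T) 0 0 != 0.
Proof.
have to_corner (T : 'M[R]_k.+1) j : T j j != 0 ->
    exists P : 'M[R]_k.+1, P \in unitmx /\ (P *m T *m P^T) 0 0 != 0.
  move=> Tjj; exists (perm_mx (tperm 0 j)); split; first exact: unitmx_perm.
  by rewrite tr_perm_mx -col_permE -row_permE !mxE tpermL.
move=> S_sym S_nz.
have [j Sjj | diag0] := pickP (fun j => S j j != 0); first exact: to_corner Sjj.
have : ~~ [forall i, forall j, S i j == 0].
  apply: contra S_nz => /forallP S0; apply/eqP/matrixP => i j; rewrite mxE.
  exact/eqP/(forallP (S0 i) j).
rewrite negb_forall => /existsP [i]; rewrite negb_forall => /existsP [j Sij].
have Ssym a b : S b a = S a b by rewrite -{1}S_sym mxE.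
have j_neq_i : j != i.
  by apply: contraNneq Sij => ji; move: (diag0 i); rewrite /= -{2}ji => /negbFE.
pose E : 'M[R]_k.+1 := 1%:M + delta_mx i j.
have E_unit : E \in unitmx.
  have : E *m (1%:M - delta_mx i j) = 1%:M.
    rewrite /E mulmxDl mulmxBr mulmxBr !mul1mx mulmx1 mul_delta_mx_0 //.
    by rewrite subr0 subrK.
  by case/mulmx1_unit.
have Tii : (E *m S *m E^T) i i != 0.
  rewrite /E linearD /= trmx1 trmx_delta mulmxDl !mulmxDr !mul1mx !mulmx1.
  have addE (A B : 'M[R]_k.+1) a b : (A + B) a b = A a b + B a b by rewrite mxE.
  rewrite mulmxDl -mulmxA !addE mul_delta_mxE !mulmx_deltaE mul_delta_mxE.
  rewrite !eqxx !mul1r !mulr1 mulmx_deltaE eqxx mulr1.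
  move/negbFE/eqP: (diag0 j) => ->; move/negbFE/eqP: (diag0 i) => ->.
  rewrite add0r addr0 Ssym -mulr2n -mulr_natr mulf_eq0 negb_or Sij two_nz //.
have [P [P_unit P00]] := to_corner _ _ Tii.
exists (P *m E); split; first by rewrite unitmx_mul P_unit E_unit.
by move: P00; rewrite trmx_mul !mulmxA.
Qed.

Lemma sym_block_reduce k (T : 'M[R]_(1 + k)) : T^T = T -> T 0 0 != 0 ->
  exists2 E : 'M[R]_(1 + k), E \in unitmx &
    exists2 S' : 'M[R]_k, S'^T = S' & E *m T *m E^T = block_mx (T 0 0)%:M 0 0 S'.
Proof.
move=> T_sym t_nz; set t := T 0 0; set u := ursubmx T.
have T_ul : ulsubmx T = t%:M.
  by rewrite [LHS]mx11_scalar; congr (_%:M); rewrite !mxE /t; congr (T _ _); apply: val_inj.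
have T_dl : dlsubmx T = u^T by rewrite trmx_ursub T_sym.
pose w := t^-1 *: u^T.
exists (block_mx 1%:M 0 (- w) 1%:M).
  by rewrite unitmxE det_lblock !det1 mul1r unitr1.
exists (drsubmx T - w *m u).
  by rewrite linearB /= trmx_mul /w linearZ /= trmxK trmx_drsub T_sym -scalemxAr -scalemxAl.
rewrite -[X in _ *m X *m _]submxK T_ul T_dl tr_block_mx !mulmx_block.
rewrite !trmx1 !trmx0 !mul1mx !mul0mx !mulmx1 !mulmx0 !addr0 ?add0r -/u.
have col0 : - w *m t%:M + u^T = 0.
  by rewrite scalar_mxC mul_scalar_mx /w scalerN scalerA mulfV // scale1r addNr.
have row0 : t%:M *m (- w)^T + u = 0.
  by rewrite mul_scalar_mx /w linearN /= linearZ /= trmxK scalerN scalerA mulfV // scale1r addNr.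
by rewrite col0 row0 mul0mx add0r mulNmx addrC.
Qed.

End QuadraticForms.

Lemma sum_mulmx_unit (F : finFieldType) k (P : 'M[F]_k) (g : 'rV[F]_k -> algC) :
  P \in unitmx -> \sum_(x : 'rV[F]_k) g x = \sum_(y : 'rV[F]_k) g (y *m P).
Proof. by move=> P_unit; rewrite (reindex_inj (can_inj (mulmxK P_unit))). Qed.

Lemma sum_row_mx (F : finFieldType) m k (g : 'rV[F]_(m + k) -> algC) :
  \sum_(y : 'rV[F]_(m + k)) g y =
  \sum_(a : 'rV[F]_m) \sum_(b : 'rV[F]_k) g (row_mx a b).
Proof.
rewrite pair_big /= (reindex (fun p : 'rV[F]_m * 'rV[F]_k => row_mx p.1 p.2)) //=.
apply: onW_bij; exists (fun y => (lsubmx y, rsubmx y)).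
  by case=> a b /=; rewrite row_mxKl row_mxKr.
by move=> y /=; rewrite hsubmxK.
Qed.

Lemma sum_rV1 (F : finFieldType) (h : F -> algC) :
  \sum_(a : 'rV[F]_1) h (a 0 0) = \sum_(z : F) h z.
Proof.
rewrite (reindex (fun z : F => (z%:M : 'rV[F]_1))) /=.
  by apply: eq_bigr => z _; rewrite mxE eqxx mulr1n.
apply: onW_bij; exists (fun a : 'rV[F]_1 => a 0 0).
  by move=> z; rewrite mxE eqxx mulr1n.
by move=> a; rewrite -mx11_scalar.
Qed.

(* By induction on k, splitting
   off a one-dimensional orthogonal summand with sym_block_reduce. *)
Lemma gauss_sum_form (F : finFieldType) (psi : F -> algC) :
  (2%:R : F) != 0 -> nontriv_char psi ->
  forall k (S : 'M[F]_k), S^T = S -> \det S != 0 ->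
  \sum_(x : 'rV[F]_k) psi (2^-1 * qform S x) = G1 psi ^+ k * legendre (\det S).
Proof.
move=> two_nz psi_char; have [_ [psiD _]] := psi_char.
elim=> [|k IHk] S S_sym S_det.
  rewrite (bigD1 0) //= big1 ?addr0; last by move=> x; rewrite thinmx0 eqxx.
  by rewrite det_mx00 legendre1 mulr1 /qform mxE big_ord0 mulr0 char0.
have S_nz : S != 0 by apply: contraNneq S_det => ->; rewrite det0.
have [P1 [P1_unit corner]] := sym_corner_nz two_nz S_sym S_nz.
pose T : 'M[F]_(1 + k) := P1 *m S *m P1^T.
have T_sym : T^T = T by rewrite /T !trmx_mul trmxK S_sym mulmxA.
have [E E_unit [S' S'_sym reduced]] := sym_block_reduce T_sym corner.
set t := T 0 0 in reduced.
pose P : 'M[F]_(1 + k) := E *m P1.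
have P_unit : P \in unitmx by rewrite unitmx_mul E_unit P1_unit.
have P_diag : P *m S *m P^T = block_mx t%:M 0 0 S'.
  by rewrite -reduced /T /P trmx_mul !mulmxA.
have det_diag : t * \det S' = \det P * \det P * \det S.
  rewrite -[X in X * _](det_scalar1 t) -(det_ublock _ 0) -P_diag.
  by rewrite det_mulmx det_mulmx det_tr mulrAC.
have detP_nz : \det P != 0 by rewrite -unitfE -unitmxE.
have S'_det : \det S' != 0.
  apply: contraNneq S_det => S'0; move/eqP: det_diag.
  by rewrite S'0 mulr0 eq_sym !mulf_eq0 (negPf detP_nz).
rewrite (sum_mulmx_unit _ P_unit).
rewrite (eq_bigr (fun y => psi (2^-1 * qform (block_mx t%:M 0 0 S') y))); last first.
  by move=> y _; rewrite qform_mulmx P_diag.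
rewrite sum_row_mx.
under eq_bigr => a _.
  rewrite (eq_bigr (fun b => psi (2^-1 * (t * (a 0 0) ^+ 2)) *
                             psi (2^-1 * qform S' b))); last first.
    by move=> b _; rewrite qform_block mulrDr psiD qform_scalar.
  rewrite -mulr_sumr IHk //.
over.
rewrite -mulr_suml (sum_rV1 (fun z => psi (2^-1 * (t * z ^+ 2)))).
rewrite gauss_sum_scale //.
have leg_S : legendre (\det S) = legendre t * legendre (\det S').
  rewrite -legendreM // det_diag !legendreM // legendre_sign // mul1r.
  by [].
by rewrite leg_S exprS [legendre t * _]mulrC mulrACA.
Qed.

Section Transversal.

Variables (R : fieldType) (n : nat) (X Y : 'M[R]_(n, n + n)).
Hypotheses (X_free : row_free X) (Y_free : row_free Y) (XY_span : (1%:M <= X + Y)%MS).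

Lemma transversal_cap0 (v : 'rV[R]_(n + n)) : (v <= X)%MS -> (v <= Y)%MS -> v = 0.
Proof.
move=> vX vY.
have rk_sum : (n + n <= \rank (X + Y))%N by rewrite -{1}(mxrank1 R (n + n)) mxrankS.
have rk_cap : \rank (X :&: Y)%MS = 0%N.
  move: (mxrank_sum_cap X Y) rk_sum; rewrite (eqP X_free) (eqP Y_free).
  by move: (\rank (X :&: Y))%MS (\rank (X + Y))%MS => a b <-; rewrite -{2}[b]addn0 leq_add2l leqn0 => /eqP.
have : (v <= X :&: Y)%MS by rewrite sub_capmx vX vY.
by move/eqP: rk_cap; rewrite mxrank_eq0 => /eqP ->; rewrite submx0 => /eqP.
Qed.

Lemma transversal_unitmx : col_mx X Y \in unitmx.
Proof. by move: XY_span; rewrite addsmxE sub1mx row_full_unit. Qed.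

End Transversal.

Lemma transversal_coord_unit (R : fieldType) n (X Y Z : 'M[R]_(n, n + n))
    (A B : 'M[R]_n) :
  row_free Y -> row_free Z -> (1%:M <= Z + Y)%MS -> Z = A *m X + B *m Y ->
  \det A != 0.
Proof.
move=> Y_free Z_free ZY_span Z_dec; apply/negP => /det0P [v v_nz vA].
have vZ : v *m Z = (v *m B) *m Y by rewrite Z_dec mulmxDr !mulmxA vA mul0mx add0r.
have vZ0 : v *m Z = 0.
  by apply: (transversal_cap0 Z_free Y_free ZY_span); rewrite ?submxMl // vZ submxMl.
by move/eqP: v_nz; apply; apply: (row_free_inj Z_free); rewrite vZ0 mul0mx.
Qed.

Section Symplectic.

Variables (F : finFieldType) (n : nat) (J : 'M[F]_(n + n)).

Lemma omegaDl u v w : omega J (u + v) w = omega J u w + omega J v w.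
Proof. by rewrite /omega !mulmxDl mxE. Qed.

Lemma omegaDr u v w : omega J w (u + v) = omega J w u + omega J w v.
Proof. by rewrite /omega linearD /= mulmxDr mxE. Qed.

Lemma omega0l w : omega J 0 w = 0.
Proof. by rewrite /omega !mul0mx mxE. Qed.

Lemma omega_mulmx m1 m2 (X : 'M[F]_(m1, n + n)) (Y : 'M[F]_(m2, n + n)) x y :
  omega J (x *m X) (y *m Y) = (x *m (X *m J *m Y^T) *m y^T) 0 0.
Proof. by rewrite /omega trmx_mul !mulmxA. Qed.

Lemma gram_mx (X Y : 'M[F]_(n, n + n)) :
  \matrix_(i < n, j < n) omega J (row i X) (row j Y) = X *m J *m Y^T.
Proof.
apply/matrixP => i j; rewrite mxE !rowE omega_mulmx.
by rewrite trmx_delta mulmx_deltaE mul_delta_mxE !eqxx mul1r mulr1.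
Qed.

Lemma lagrangian_gram (X : 'M[F]_(n, n + n)) : olag J X -> X *m J *m X^T = 0.
Proof.
move=> [_ X_iso]; rewrite -gram_mx; apply/matrixP => i j.
by rewrite !mxE X_iso ?row_sub.
Qed.

Lemma symplectic_skew : symplectic J -> J^T = - J.
Proof.
move=> [alt _]; apply/matrixP => i j.
have unitE a b : omega J (delta_mx 0 a) (delta_mx 0 b) = J a b.
  by rewrite /omega trmx_delta mulmx_deltaE mul_delta_mxE !eqxx mul1r mulr1.
have := alt (delta_mx 0 i + delta_mx 0 j).
rewrite omegaDl !omegaDr !alt add0r addr0 !unitE => /eqP.
by rewrite addr_eq0 !mxE => /eqP ->; rewrite opprK.
Qed.

Lemma transversal_gram_det (X Y : 'M[F]_(n, n + n)) :
  symplectic J -> olag J X -> row_free Y -> (1%:M <= Y + X)%MS ->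
  \det (X *m J *m Y^T) != 0.
Proof.
move=> [_ nondeg] X_lag Y_free YX_span; have [X_free _] := X_lag.
apply/negP => /det0P [v v_nz vG].
have XJ_Y : v *m X *m J *m Y^T = 0 by rewrite !mulmxA in vG.
have XJ_X : v *m X *m J *m X^T = 0.
  by have := congr1 (mulmx v) (lagrangian_gram X_lag); rewrite mulmx0 !mulmxA.
have XJ0 : v *m X *m J = 0.
  have : v *m X *m J *m (col_mx Y X)^T = 0.
    by rewrite tr_col_mx mul_mx_row XJ_Y XJ_X row_mx0.
  move/(congr1 (mulmx^~ (invmx (col_mx Y X)^T))).
  by rewrite mulmxK ?unitmx_tr ?transversal_unitmx // mul0mx.
have vX0 : v *m X = 0 by apply: nondeg => w; rewrite /omega XJ0 mul0mx mxE.
by move/eqP: v_nz; apply; apply: (row_free_inj X_free); rewrite vX0 mul0mx.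
Qed.

(* The normalising constant A_{Y,X} in terms of the Gram matrix: the sign
   (-1)^{n(n-1)/2} occurs twice and cancels. *)
Lemma Acoef_gram (psi : F -> algC) (Y X : 'M[F]_(n, n + n)) :
  Acoef J psi Y X =
  (G1 psi / (#|F|)%:R) ^+ n * legendre (\det (X *m J *m Y^T)).
Proof.
rewrite /Acoef /omega_wedge gram_mx mulrA -exprD addnn -signr_odd odd_double.
by rewrite expr0 mul1r.
Qed.

Lemma lagrangian_coordinates (BN BM BL : 'M[F]_(n, n + n)) :
  olag J BN -> olag J BM -> olag J BL ->
  (1%:M <= BN + BM)%MS -> (1%:M <= BM + BL)%MS -> (1%:M <= BN + BL)%MS ->
  exists A B : 'M[F]_n,
    [/\ BM = A *m BN + B *m BL, \det A != 0 & \det B != 0].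
Proof.
move=> [N_free _] [M_free _] [L_free _] NM_span ML_span NL_span.
pose C := BM *m invmx (col_mx BN BL).
have M_dec : BM = lsubmx C *m BN + rsubmx C *m BL.
  by rewrite -mul_row_col hsubmxK /C mulmxKV ?transversal_unitmx.
exists (lsubmx C), (rsubmx C); split => //.
  exact: transversal_coord_unit L_free M_free ML_span M_dec.
apply: (transversal_coord_unit (X := BL) (B := lsubmx C) N_free M_free).
  by rewrite addsmxC.
by rewrite addrC.
Qed.

End Symplectic.

(* The three Gram matrices of a triple (N, M, L) with M = A N + B L, all
   expressed through P = L J N^T; isotropy of M makes B P A^T symmetric. *)
Section LagrangianTriple.

Variables (F : finFieldType) (n : nat) (J : 'M[F]_(n + n)).
Variables (BN BM BL : 'M[F]_(n, n + n)) (A B : 'M[F]_n).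
Hypotheses (symJ : symplectic J) (N_lag : olag J BN) (M_lag : olag J BM).
Hypotheses (L_lag : olag J BL) (M_dec : BM = A *m BN + B *m BL).

Local Notation P := (BL *m J *m BN^T).

Lemma gram_NL : BN *m J *m BL^T = - P^T.
Proof.
by rewrite !trmx_mul trmxK (symplectic_skew symJ) mulNmx mulmxN opprK mulmxA.
Qed.

Lemma gram_MN : BM *m J *m BN^T = B *m P.
Proof.
rewrite M_dec !mulmxDl -!mulmxA (mulmxA BN) (lagrangian_gram N_lag).
by rewrite mulmx0 add0r !mulmxA.
Qed.

Lemma gram_LM : BL *m J *m BM^T = P *m A^T.
Proof.
rewrite M_dec linearD /= !trmx_mul mulmxDr (mulmxA _ BL^T) (lagrangian_gram L_lag).
by rewrite mul0mx addr0 !mulmxA.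
Qed.

Lemma gram_ML : BM *m J *m BL^T = - (A *m P^T).
Proof.
rewrite M_dec !mulmxDl -!mulmxA (mulmxA BL) (lagrangian_gram L_lag) mulmx0.
by rewrite addr0 (mulmxA BN) gram_NL mulmxN !mulmxA.
Qed.

Lemma kernel_form_sym : (B *m P *m A^T)^T = B *m P *m A^T.
Proof.
have MM : BM *m J *m BM^T = B *m P *m A^T - A *m P^T *m B^T.
  rewrite {2}M_dec linearD /= !trmx_mul mulmxDr !mulmxA gram_MN.
  by rewrite gram_ML mulNmx !trmx_mul !mulmxA.
have : B *m P *m A^T = A *m P^T *m B^T.
  by apply/eqP; rewrite -subr_eq0 -MM lagrangian_gram.
by rewrite !trmx_mul !trmxK !mulmxA => ->.
Qed.

Lemma kernel_qform (x : 'rV[F]_n) :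
  omega J (x *m B *m BL) (x *m A *m BN) = qform (B *m P *m A^T) x.
Proof. by rewrite -!mulmxA omega_mulmx /qform trmx_mul !mulmxA. Qed.

Lemma kernel_gauss_sum (psi : F -> algC) :
  (2%:R : F) != 0 -> nontriv_char psi ->
  \det A != 0 -> \det B != 0 -> \det P != 0 ->
  \sum_(x : 'rV[F]_n) psi (- (2^-1 * omega J (x *m B *m BL) (x *m A *m BN))) =
  G1 psi ^+ n * legendre ((-1) ^+ n * \det B * \det P * \det A).
Proof.
move=> two_nz psi_char A_det B_det P_det.
have S_det : \det (- (B *m P *m A^T)) = (-1) ^+ n * \det B * \det P * \det A.
  by rewrite -scaleN1r detZ !det_mulmx det_tr !mulrA.
rewrite -S_det -gauss_sum_form //; last first.
- by rewrite S_det !mulf_neq0 // expf_neq0 // oppr_eq0 oner_eq0.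
- by rewrite linearN /= kernel_form_sym.
apply: eq_bigr => x _; congr psi.
by rewrite kernel_qform /qform mulmxN mulNmx [in RHS]mxE mulrN.
Qed.

End LagrangianTriple.

Lemma sum_submx (F : finFieldType) N m (X : 'M[F]_(m, N)) (g : 'rV[F]_N -> algC) :
  row_free X ->
  \sum_(v : 'rV[F]_N | (v <= X)%MS) g v = \sum_(x : 'rV[F]_m) g (x *m X).
Proof.
move=> X_free; rewrite (reindex (fun x : 'rV[F]_m => x *m X)) /=.
  by apply: eq_bigl => x; rewrite submxMl.
exists (fun v => v *m pinvmx X); first by move=> x _; rewrite mulmxKp.
by move=> v; rewrite inE => vX; rewrite mulmxKpV.
Qed.

Lemma sum_submx_shift (F : finFieldType) N m (X : 'M[F]_(m, N)) (c : 'rV[F]_N)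
    (g : 'rV[F]_N -> algC) : (c <= X)%MS ->
  \sum_(v : 'rV[F]_N | (v <= X)%MS) g (c + v) =
  \sum_(v : 'rV[F]_N | (v <= X)%MS) g v.
Proof.
move=> cX; rewrite [RHS](reindex_inj (addrI c)) /=; apply: eq_bigl => v.
apply/idP/idP => vX; first by rewrite addmx_sub.
by rewrite -(addKr c v) addmx_sub // eqmx_opp.
Qed.

Section HeisenbergComposition.

Variables (F : finFieldType) (n : nat) (J : 'M[F]_(n + n)).

(* For m = mN + mL with mN orthogonal to y, the product (m,0)(y,0)h is a
   central element times (mL,0) times (mN + y, 0) h; used to move the
   L-component of m through the L-equivariance of f. *)
Lemma hmul_split (m mN mL y : 'rV[F]_(n + n)) (h : heis F n) :
  m = mN + mL -> omega J mN y = 0 ->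
  hmul J (m, 0) (hmul J (y, 0) h) =
  hmul J (hmul J (0, - (2^-1 * omega J mL mN)) (mL, 0)) (hmul J (mN + y, 0) h).
Proof.
move=> -> Ny0; case: h => h1 h2; rewrite /hmul /=; congr pair.
  by rewrite add0r [mN + mL]addrC -!addrA.
rewrite !omegaDl !omegaDr !omega0l Ny0 !add0r !addr0 !mulrDr.
set a := 2^-1 * omega J y h1; set b := 2^-1 * omega J mN h1.
set c := 2^-1 * omega J mL h1; set d := 2^-1 * omega J mL y.
set e := 2^-1 * omega J mL mN.
rewrite mulr0 addr0 [- e + _]addrC -[_ + - e + _]addrA [- e + _]addrA addKr.
by rewrite -!addrA [b + (a + _)]addrCA.
Qed.

Lemma Tmap_comp_kernel (psi : F -> algC) (BN BM BL : 'M[F]_(n, n + n))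
    (A B : 'M[F]_n) (f : heis F n -> algC) (h : heis F n) :
  olag J BN -> row_free BM -> BM = A *m BN + B *m BL -> inH J psi BL f ->
  Tmap J psi BN BM (Tmap J psi BM BL f) h =
  Acoef J psi BN BM * Acoef J psi BM BL *
  (\sum_(x : 'rV[F]_n) psi (- (2^-1 * omega J (x *m B *m BL) (x *m A *m BN)))) *
  Fmap J BN f h.
Proof.
move=> [_ N_iso] M_free M_dec fH; rewrite /Tmap /Fmap.
rewrite -mulr_sumr -[RHS]mulrA -[RHS]mulrA; congr (_ * (_ * _)).
pose K x := psi (- (2^-1 * omega J (x *m B *m BL) (x *m A *m BN))).
transitivity (\sum_(y : 'rV[F]_(n + n) | (y <= BN)%MS) \sum_(x : 'rV[F]_n)
   K x * f (hmul J (x *m A *m BN + y, 0) h)).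
  apply: eq_bigr => y yN; rewrite (sum_submx _ M_free); apply: eq_bigr => x _.
  rewrite (@hmul_split (x *m BM) (x *m A *m BN) (x *m B *m BL) y h).
  - by rewrite fH ?submxMl.
  - by rewrite M_dec mulmxDr !mulmxA.
  - by rewrite N_iso ?submxMl.
rewrite exchange_big mulr_suml; apply: eq_bigr => x _.
rewrite -mulr_sumr; congr (_ * _).
by rewrite (sum_submx_shift (fun v => f (hmul J (v, 0) h))) ?submxMl.
Qed.

End HeisenbergComposition.

Theorem mainTheorem1 (F : finFieldType) (n : nat) (J : 'M[F]_(n + n))
  (psi : F -> algC) (BN BM BL : 'M[F]_(n, n + n)) :
  (2%:R : F) != 0 ->
  symplectic J ->
  nontriv_char psi ->
  olag J BN -> olag J BM -> olag J BL ->
  gen_pos BN BM -> gen_pos BM BL -> gen_pos BN BL ->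
  forall f : heis F n -> algC, inH J psi BL f ->
    Tmap J psi BN BL f =1 Tmap J psi BN BM (Tmap J psi BM BL f).
Proof.
move=> two_nz symJ psi_char N_lag M_lag L_lag NM_span ML_span NL_span f fH h.
have [A [B [M_dec A_det B_det]]] :=
  lagrangian_coordinates N_lag M_lag L_lag NM_span ML_span NL_span.
have [[N_free _] [M_free _]] := (N_lag, M_lag).
have P_det := transversal_gram_det symJ L_lag N_free NL_span.
rewrite (Tmap_comp_kernel h N_lag M_free M_dec fH).
rewrite (kernel_gauss_sum symJ N_lag M_lag L_lag M_dec) // /Tmap.
rewrite !Acoef_gram (gram_MN N_lag M_dec) (gram_LM L_lag M_dec) !det_mulmx det_tr.
by congr (_ * _); apply: gauss_cocycle_scalar.
Qed.
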